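(* Let $G=K(n_1,\dots,n_s)$ be a complete $s$-partite graph ($s\ge 2$) with $1\le n_j\le 2$ for all $j\in\{1,\dots,s\}$. Then $\chi_3(G)=\left\lceil \frac{n_1+n_2+\cdots+n_s}{4}\right\rceil$.
   Context: $K(n_1,\dots,n_s)$ denotes the complete $s$-partite graph whose parts have $n_1,\dots,n_s$ vertices. A map $f:V(G)\to\{1,\dots,k\}$ is a $3$-relaxed $k$-coloring if every vertex $u$ has at most $3$ neighbors $v$ with $f(v)=f(u)$; $\chi_3(G)$ is the minimum $k$ for which such a coloring exists. *)

From mathcomp Require Import all_boot.
Set Implicit Arguments. Unset Strict Implicit. Unset Printing Implicit Defensive.

(* f : T -> 'I_k  (colors {0,..,k-1} stand for {1,..,k}) is a 3-relaxed
   k-coloring if every vertex has at most 3 neighbours of its own color. *)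
Definition relaxed3_coloring (T : finType) (adj : rel T) (k : nat)
  (f : T -> 'I_k) : Prop :=
  forall u : T, #|[set v | adj u v & f v == f u]| <= 3.

Definition relaxed3_colorable (T : finType) (adj : rel T) (k : nat) : Prop :=
  exists f : T -> 'I_k, relaxed3_coloring adj f.

Definition is_chi3 (T : finType) (adj : rel T) (m : nat) : Prop :=
  relaxed3_colorable adj m /\ forall k, relaxed3_colorable adj k -> m <= k.

(* Complete s-partite graph K(n_1,...,n_s): vertices are pairs (i, a) with
   a < n i, and two vertices are adjacent iff they lie in different parts. *)
Definition cmp_vertex (s : nat) (n : 'I_s -> nat) : finType :=
  {i : 'I_s & 'I_(n i)}.

Definition cmp_adj (s : nat) (n : 'I_s -> nat) : rel (cmp_vertex n) :=
  fun u v => tag u != tag v.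

Definition ceil_div (a b : nat) : nat := (a + b.-1) %/ b.

(* Cutting an enumeration of the vertices into consecutive blocks of four
   gives a colouring with ceil(N/4) colours in which each vertex has at most
   three vertices of its own colour besides itself.  Conversely, let A be a
   colour class of a 3-relaxed colouring and u in A: the other vertices of A
   are the at most 3 neighbours of u of its colour, plus at most one more
   vertex in the part of u.  So |A| <= 5, and |A| = 5 would force every part
   that meets A to meet it in exactly two vertices, making |A| even.  Hence
   every class has at most 4 vertices and at least ceil(N/4) colours are
   needed. *)
From mathcomp Require Import all_boot.
From mathcomp Require Import zify.

Lemma ceil_div_leq (a m k : nat) : 0 < m -> (ceil_div a m <= k) = (a <= m * k).
Proof.
by case: m => // m _; rewrite /ceil_div -ltnS ltn_divLR //; apply/idP/idP; lia.
Qed.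

Lemma ltn_div_ceil_div (r N m : nat) : 0 < m -> r < N -> r %/ m < ceil_div N m.
Proof.
move=> m_gt0 rN.
by rewrite /ceil_div -add1n -(divnMDl 1 r m_gt0) leq_div2r //; lia.
Qed.

Section ColorClasses.

Context {T : finType}.

Lemma card_leq_mul_classes {k m : nat} {f : T -> 'I_k} :
  (forall c, #|[set v | f v == c]| <= m) -> #|T| <= m * k.
Proof.
move=> small; rewrite -sum1_card (partition_big f predT) //=.
rewrite -[k in m * k]card_ord mulnC -sum_nat_const; apply: leq_sum => c _.
rewrite sum1_card (leq_trans _ (small c)) // subset_leq_card //.
by apply/subsetP => v; rewrite !inE.
Qed.

Lemma exists_coloring_small_classes (N m : nat) : 0 < m -> #|T| <= N ->
  exists f : T -> 'I_(ceil_div N m), forall c, #|[set v | f v == c]| <= m.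
Proof.
move=> m_gt0 TN.
have block_lt (v : T) : enum_rank v %/ m < ceil_div N m.
  exact: ltn_div_ceil_div m_gt0 (leq_trans (ltn_ord _) TN).
pose color v := Ordinal (block_lt v).
exists color => c; set A := [set v | color v == c].
have block_c v : v \in A -> enum_rank v %/ m = c by rewrite inE => /eqP <-.
pose rem_rank (v : T) : 'I_m := Ordinal (ltn_pmod (enum_rank v) m_gt0).
have rem_rank_inj : {in A &, injective rem_rank}.
  move=> x y xA yA /(congr1 val) /= same_rem; apply/enum_rank_inj/ord_inj.
  rewrite (divn_eq (enum_rank x) m) (divn_eq (enum_rank y) m).
  by rewrite (block_c x xA) (block_c y yA) same_rem.
by rewrite -(card_in_imset rem_rank_inj) (leq_trans (max_card _)) ?card_ord.
Qed.

Lemma relaxed3_coloring_of_small_classes {adj : rel T} {k : nat} {f : T -> 'I_k} :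
  irreflexive adj -> (forall c, #|[set v | f v == c]| <= 4) ->
  relaxed3_coloring adj f.
Proof.
move=> adj_irr small u; set A := [set v | f v == f u].
have sub : [set v | adj u v & f v == f u] \subset A :\ u.
  apply/subsetP => v; rewrite !inE => /andP[uv ->]; rewrite andbT.
  by apply: contraTneq uv => ->; rewrite adj_irr.
rewrite (leq_trans (subset_leq_card sub)) //.
by have := small (f u); rewrite (cardsD1 u A) inE eqxx; lia.
Qed.

End ColorClasses.

Section CompleteMultipartite.

Context {s : nat} (n : 'I_s -> nat).

Local Notation V := (cmp_vertex n).

Lemma card_cmp_vertex : #|V| = \sum_(j < s) n j.
Proof.
rewrite /cmp_vertex card_tagged sumnE big_map big_enum /=.
by apply: eq_bigr => i _; rewrite card_ord.
Qed.

Lemma cmp_adj_irreflexive : irreflexive (@cmp_adj s n).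
Proof. by move=> v; rewrite /cmp_adj eqxx. Qed.

Lemma card_part_leq (A : {set V}) (i : 'I_s) :
  #|[set v in A | tag v == i]| <= n i.
Proof.
pose inj (a : 'I_(n i)) : V := Tagged (fun j => 'I_(n j)) a.
apply: (@leq_trans #|inj @: [set: 'I_(n i)]|).
  apply/subset_leq_card/subsetP => -[j a]; rewrite inE /= => /andP[_ /eqP j_i].
  by subst j; apply/imsetP; exists a; rewrite ?inE.
by rewrite (leq_trans (leq_imset_card _ _)) // cardsT card_ord.
Qed.

Lemma card_sum_parts (A : {set V}) :
  #|A| = \sum_(i < s) #|[set v in A | tag v == i]|.
Proof.
rewrite -sum1_card (partition_big (fun v : V => tag v) predT) //=.
by apply: eq_bigr => i _; rewrite -sum1_card; apply: eq_bigl => v; rewrite !inE.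
Qed.

Lemma card_color_class_split {k : nat} {f : V -> 'I_k} {u : V} {A : {set V}} :
  A = [set v | f v == f u] ->
  #|A| = #|[set v | cmp_adj u v & f v == f u]| + #|[set v in A | tag v == tag u]|.
Proof.
move=> defA; rewrite -(cardsID [set v | tag v == tag u] A) addnC defA.
by congr (_ + _); apply: eq_card => v; rewrite !inE /cmp_adj 1?eq_sym 1?andbC.
Qed.

Lemma dvdn2_card_of_pair_slices (A : {set V}) :
  (forall w, w \in A -> #|[set v in A | tag v == tag w]| = 2) -> 2 %| #|A|.
Proof.
move=> pairs; rewrite card_sum_parts; apply: dvdn_sum => i _.
have [-> | [w]] := set_0Vmem [set v in A | tag v == i]; first by rewrite cards0.
by rewrite inE => /andP[wA /eqP <-]; rewrite pairs.
Qed.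

Lemma relaxed3_class_card_leq4 {k : nat} {f : V -> 'I_k} :
  (forall j, n j <= 2) -> relaxed3_coloring (@cmp_adj s n) f ->
  forall c : 'I_k, #|[set v | f v == c]| <= 4.
Proof.
move=> n_le2 f_relaxed c; set A := [set v | f v == c].
have bounds w : w \in A ->
    #|A| <= 5 /\ (#|A| = 5 -> #|[set v in A | tag v == tag w]| = 2).
  rewrite inE => /eqP fw.
  have defA : A = [set v | f v == f w] by rewrite fw.
  have split := card_color_class_split defA.
  have nbrs := f_relaxed w.
  have part := leq_trans (card_part_leq A (tag w)) (n_le2 (tag w)).
  lia.
case: (leqP #|A| 4) => // A_gt4.
have [u uA] : exists u, u \in A by apply/set0Pn; rewrite -card_gt0; lia.
have A5 : #|A| = 5 by have [] := bounds u uA; lia.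
have := dvdn2_card_of_pair_slices A (fun w wA => (bounds w wA).2 A5).
by rewrite A5.
Qed.

End CompleteMultipartite.

Theorem lemma5p6 (s : nat) (n : 'I_s -> nat) :
  2 <= s ->
  (forall j : 'I_s, 1 <= n j <= 2) ->
  is_chi3 (@cmp_adj s n) (ceil_div (\sum_(j < s) n j) 4).
Proof.
move=> _ n_bounds; have n_le2 j : n j <= 2 by case/andP: (n_bounds j).
split.
- have [f small] := exists_coloring_small_classes _ 4 isT (eq_leq (card_cmp_vertex n)).
  exists f; exact: relaxed3_coloring_of_small_classes (cmp_adj_irreflexive n) small.
- move=> k [f f_relaxed]; rewrite ceil_div_leq // -card_cmp_vertex.
  exact: card_leq_mul_classes (relaxed3_class_card_leq4 n n_le2 f_relaxed).
Qed.
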